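(* Consider the complex-valued protocol. Let $\mathcal F$ be a compact subset of $C(\mathbf X)$ and $M>0$ be such that $$L:=\limsup_{\epsilon\to0}\frac{\mathcal H_\epsilon(\mathcal F)}{\log^M(1/\epsilon)}\in(0,\infty).$$ There exists a strategy for Predictor such that for every $F\in\mathcal F$ there is $N_0$ (depending on $F$ but not on Reality's moves) such that for all $N\ge N_0$ and all moves of Reality $$\sum_{n=1}^N|y_n-\mu_n|^2\le\sum_{n=1}^N|y_n-F(x_n)|^2+CL\log^MN,$$ where $C$ is a universal constant.
   Context: Complex-valued protocol: $\mathbf X$ a nonempty topological space; at each round $n$ Reality announces $x_n\in\mathbf X$, Predictor announces $\mu_n\in\mathbb C$, Reality announces $y_n\in\mathbb C$ with $|y_n|\le1$; a strategy for Predictor maps each history $(x_1,y_1,\dots,x_{n-1},y_{n-1},x_n)$ to $\mu_n$. Here $C(\mathbf X)$ denotes the bounded continuous complex-valued functions on $\mathbf X$ with the supremum norm. $\mathcal H_\epsilon(A)$: $\log_2$ of the minimal number of points of $A$ forming an $\epsilon$-net for $A$ in the supremum metric. $\log=\log_2$. *)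

(* Complex numbers are pairs (Re, Im) : R * R,
   carrying the product topology (= the usual topology of C). *)
From Stdlib Require Import Reals List ClassicalEpsilon.
From mathcomp Require Import all_boot all_classical.
From mathcomp Require Import topology Rstruct Rstruct_topology.

Set Implicit Arguments.
Unset Strict Implicit.
Unset Printing Implicit Defensive.

Local Open Scope R_scope.

Definition Cpx : Type := (R * R)%type.
Definition csub (z w : Cpx) : Cpx := (fst z - fst w, snd z - snd w).
Definition cabs (z : Cpx) : R := sqrt (fst z ^ 2 + snd z ^ 2).

Definition log2 (x : R) : R := ln x / ln 2.

(* x ^ M for real M >= 0 exponent, with the convention 0 ^ M = 0 (M > 0) *)
Definition rpow (x M : R) : R := if Rlt_dec 0 x then Rpower x M else 0.

Section CX.
Variable X : topologicalType.

Definition bcont (f : X -> Cpx) : Prop :=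
  continuous f /\ exists B : R, forall x, cabs (f x) <= B.

Definition supdist_le (f g : X -> Cpx) (e : R) : Prop :=
  forall x, cabs (csub (f x) (g x)) <= e.
Definition supdist_lt (f g : X -> Cpx) (r : R) : Prop :=
  exists r', r' < r /\ supdist_le f g r'.

Definition sup_open (U : set (X -> Cpx)) : Prop :=
  forall f, bcont f -> U f ->
    exists r, 0 < r /\ forall g, bcont g -> supdist_lt f g r -> U g.

Definition sup_compact (A : set (X -> Cpx)) : Prop :=
  (forall f, A f -> bcont f) /\
  forall (I : Type) (U : I -> set (X -> Cpx)),
    (forall i, sup_open (U i)) ->
    (forall f, A f -> exists i, U i f) ->
    exists s : list I, forall f, A f -> exists i, In i s /\ U i f.

Definition is_net (A : set (X -> Cpx)) (e : R) (s : list (X -> Cpx)) : Prop :=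
  (forall g, In g s -> A g) /\
  (forall f, A f -> exists g, In g s /\ supdist_le f g e).

Definition is_covnum (A : set (X -> Cpx)) (e : R) (n : nat) : Prop :=
  (exists s, is_net A e s /\ length s = n) /\
  (forall s, is_net A e s -> (n <= length s)%coq_nat).

Definition covnum (A : set (X -> Cpx)) (e : R) : nat :=
  epsilon (inhabits 0%nat) (fun n => is_covnum A e n).

Definition entropy (A : set (X -> Cpx)) (e : R) : R := log2 (INR (covnum A e)).
End CX.

Definition is_limsup0 (h : R -> R) (L : R) : Prop :=
  (forall eta, 0 < eta -> exists d, 0 < d /\
     forall e, 0 < e < d -> h e <= L + eta) /\
  (forall eta d, 0 < eta -> 0 < d -> exists e, 0 < e < d /\ L - eta <= h e).

Fixpoint rsum (f : nat -> R) (N : nat) : R :=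
  match N with O => 0 | S k => rsum f k + f k end.

Definition strategy (X : Type) : Type := list (X * Cpx) -> X -> Cpx.

(* the prediction at round n (0-based) given Reality's moves xs, ys *)
Definition pred_at (X : Type) (S : strategy X) (xs : nat -> X) (ys : nat -> Cpx)
  (n : nat) : Cpx :=
  S (List.map (fun i => (xs i, ys i)) (List.seq 0 n)) (xs n).

From Stdlib Require Import Reals Lra Lia List ClassicalEpsilon.
From mathcomp Require Import all_boot all_classical.
From mathcomp Require Import topology Rstruct Rstruct_topology.
From mathcomp Require Import zify.
From Coquelicot Require Import Rcomplements.
From Coquelicot Require Complex.
Local Open Scope R_scope.

(* Predictor runs the aggregating algorithm with learning rate 1/64 (for which
   the square loss on the box [-1,1]^2 is mixable) over the "sleeping" experts
   (k, j): the j-th element of a minimal 2^-k-net of F, clipped to the box,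
   which only takes part in the rounds n with k < 2^n.  Expert (k, j) gets prior
   weight 1/((k+1)(k+2)|net_k|), so the aggregated loss exceeds its loss by at
   most 64 ln(1/prior) plus 8 per round it sleeps.  At time N take
   k = ceil(log2 N): the net element within 2^-k of F costs at most 9 2^-k N <= 9,
   ln|net_k| <= H_{2^-k}(F) <= 2 L k^M, and k <= log2 N + 1 sleeps only
   O(log k) rounds, so everything besides 128 L k^M is of lower order. *)

Lemma rsum_ext (f g : nat -> R) n :
  (forall i, (i < n)%coq_nat -> f i = g i) -> rsum f n = rsum g n.
Proof.
induction n as [|n IH]; intros H; simpl; [reflexivity|].
rewrite IH; [|intros; apply H; lia]. rewrite (H n); [reflexivity|lia].
Qed.

Lemma rsum_le (f g : nat -> R) n :
  (forall i, (i < n)%coq_nat -> f i <= g i) -> rsum f n <= rsum g n.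
Proof.
induction n as [|n IH]; intros H; simpl; [lra|].
assert (rsum f n <= rsum g n) by (apply IH; intros; apply H; lia).
assert (f n <= g n) by (apply H; lia). lra.
Qed.

Lemma rsum_plus (f g : nat -> R) n :
  rsum (fun i => f i + g i) n = rsum f n + rsum g n.
Proof. induction n as [|n IH]; simpl; [lra|]. rewrite IH. lra. Qed.

Lemma rsum_scal (c : R) (f : nat -> R) n :
  rsum (fun i => c * f i) n = c * rsum f n.
Proof. induction n as [|n IH]; simpl; [lra|]. rewrite IH. lra. Qed.

Lemma rsum_const (c : R) n : rsum (fun _ => c) n = c * INR n.
Proof. induction n as [|n IH]; simpl rsum; [simpl; lra|]. rewrite IH S_INR. ring. Qed.

Lemma rsum_nonneg (f : nat -> R) n :
  (forall i, (i < n)%coq_nat -> 0 <= f i) -> 0 <= rsum f n.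
Proof.
intros H. rewrite <- (Rmult_0_l (INR n)), <- rsum_const. apply rsum_le. exact H.
Qed.

Lemma rsum_ge_term (f : nat -> R) n i :
  (forall i, (i < n)%coq_nat -> 0 <= f i) -> (i < n)%coq_nat -> f i <= rsum f n.
Proof.
induction n as [|n IH]; intros H Hi; [lia|]. simpl.
destruct (Nat.eq_dec i n) as [->|Hne].
- assert (0 <= rsum f n) by (apply rsum_nonneg; intros; apply H; lia). lra.
- assert (f i <= rsum f n) by (apply IH; [intros; apply H; lia| lia]).
  assert (0 <= f n) by (apply H; lia). lra.
Qed.

Lemma rsum_split (f : nat -> R) a b :
  rsum f (a + b)%coq_nat = rsum f a + rsum (fun i => f (a + i)%coq_nat) b.
Proof.
induction b as [|b IH].
- rewrite Nat.add_0_r. simpl. lra.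
- rewrite Nat.add_succ_r. simpl. rewrite IH. lra.
Qed.

Lemma rsum_le_bound (g : nat -> R) (B : R) N :
  (forall t, g t <= B) -> rsum g N <= B * INR N.
Proof. intros Hg. rewrite <- rsum_const. apply rsum_le. auto. Qed.

Lemma rsum_le_of_eventually_nonpos (g : nat -> R) (B : R) s N :
  0 <= B -> (forall t, g t <= B) -> (forall t, (s <= t)%coq_nat -> g t <= 0) ->
  rsum g N <= B * INR s.
Proof.
intros HB Hg H0. destruct (Nat.le_gt_cases N s) as [Hle|Hlt].
- apply Rle_trans with (B * INR N); [apply rsum_le_bound; auto|].
  apply Rmult_le_compat_l; [lra|]. apply le_INR; auto.
- replace N with (s + (N - s))%coq_nat by lia. rewrite rsum_split.
  assert (rsum g s <= B * INR s) by (apply rsum_le_bound; auto).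
  assert (rsum (fun i => g (s + i)%coq_nat) (N - s) <= 0 * INR (N - s)).
  { apply rsum_le_bound. intros t. apply H0. lia. }
  lra.
Qed.

Lemma exp_le_quadratic (x : R) : x <= / 2 -> exp x <= 1 + x + 2 * x ^ 2.
Proof.
intros Hx.
assert (H1 : 1 - x <= exp (- x)) by (pose proof (exp_ineq1_le (- x)); lra).
assert (He : exp x * exp (- x) = 1)
  by (rewrite <- exp_plus; replace (x + - x) with 0 by ring; apply exp_0).
assert (Hex : 0 < exp x) by apply exp_pos.
assert (exp x * (1 - x) <= 1) by (rewrite <- He; apply Rmult_le_compat_l; lra).
assert (1 <= (1 - x) * (1 + x + 2 * x ^ 2)) by nra.
nra.
Qed.

Lemma exp_le_mono a b : a <= b -> exp a <= exp b.
Proof.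
intros H. destruct (Rle_lt_or_eq_dec _ _ H) as [Hlt| ->]; [apply Rlt_le, exp_increasing; auto| lra].
Qed.

Lemma ln_le_self u : 0 < u -> ln u <= u.
Proof. intros Hu. pose proof (exp_ineq1_le (ln u)). rewrite exp_ln in H; auto. lra. Qed.

Lemma ln2_pos : 0 < ln 2.
Proof. pose proof ln_lt_2. lra. Qed.

Lemma ln2_lt_1 : ln 2 < 1.
Proof.
rewrite <- (ln_exp 1). apply ln_increasing; [lra|]. pose proof (exp_ineq1 1). lra.
Qed.

Lemma Rpower_pos x y : 0 < Rpower x y.
Proof. apply exp_pos. Qed.

Lemma log2_INR_ge_of_pow_le n N : (Nat.pow 2 n <= N)%coq_nat -> INR n <= log2 (INR N).
Proof.
intros H. apply le_INR in H. rewrite pow_INR in H. replace (INR 2) with 2 in H by (simpl; lra).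
pose proof (ln_le _ _ (pow_lt 2 n ltac:(lra)) H) as Hl. rewrite ln_pow in Hl; [|lra].
unfold log2. pose proof ln2_pos. apply Rmult_le_reg_r with (ln 2); [lra|].
unfold Rdiv. rewrite Rmult_assoc Rinv_l; lra.
Qed.

Lemma INR_log2_le_ln k : (0 < k)%coq_nat -> INR (Nat.log2 k) <= 2 * ln (INR k + 2).
Proof.
intros Hk. destruct (Nat.log2_spec k Hk) as [H1 _].
apply le_INR in H1. rewrite pow_INR in H1. simpl in H1.
pose proof (ln_le _ _ (pow_lt 2 (Nat.log2 k) ltac:(lra)) H1) as Hl. rewrite ln_pow in Hl; [|lra].
pose proof ln_lt_2. pose proof (pos_INR (Nat.log2 k)).
assert (ln (INR k) <= ln (INR k + 2)) by (apply ln_le; [apply lt_0_INR; lia| lra]).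
nra.
Qed.

(* [ln (l+1) <= ln l + 1/l], and [M/l <= 1/2 < ln 2]. *)
Lemma Rpower_succ_le_twice l M :
  0 < M -> 0 < l -> 2 * M <= l -> Rpower (l + 1) M <= 2 * Rpower l M.
Proof.
intros HM Hl HlM. unfold Rpower.
assert (Hinv : 0 < / l) by (apply Rinv_0_lt_compat; lra).
assert (Hln : ln (l + 1) <= ln l + / l).
{ replace (l + 1) with (l * (1 + / l)) by (field; lra).
  rewrite ln_mult; [|lra|lra].
  pose proof (exp_ineq1_le (/ l)) as H. apply ln_le in H; [|lra]. rewrite ln_exp in H. lra. }
assert (HMl : M * / l <= / 2).
{ apply Rmult_le_reg_r with l; [lra|]. rewrite Rmult_assoc Rinv_l; lra. }
apply Rle_trans with (exp (M * ln l + / 2)).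
- apply exp_le_mono. nra.
- rewrite exp_plus Rmult_comm. apply Rmult_le_compat_r; [apply Rlt_le, exp_pos|].
  pose proof ln_lt_2. rewrite <- (exp_ln 2) at 2; [|lra]. apply Rlt_le, exp_increasing. lra.
Qed.

(* Write [l ^ M = u ^ 2] with [u = l ^ (M/2)]; then [ln l <= (2/M) u] and the
   left-hand side is [O(u)]. *)
Lemma ln_eventually_le_Rpower (M L A B : R) : 0 < M -> 0 < L -> 0 <= A -> 0 <= B ->
  exists l1, forall l, l1 <= l -> A + B * ln (l + 3) <= L * Rpower l M.
Proof.
intros HM HL HA HB.
assert (H2M : 0 < 2 / M) by (apply Rdiv_lt_0_compat; lra).
set (K := A + B + B * (2 / M)).
assert (HK : 0 <= K) by (unfold K; nra).
set (Bd := K / L + 1).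
assert (HBd : 1 <= Bd).
{ unfold Bd. assert (0 <= K / L) by (apply Rmult_le_pos; [lra| apply Rlt_le, Rinv_0_lt_compat; lra]). lra. }
exists (Rmax 3 (Rpower Bd (2 / M))). intros l Hl.
assert (Hl3 : 3 <= l) by (eapply Rle_trans; [apply Rmax_l| exact Hl]).
assert (HlB : Rpower Bd (2 / M) <= l) by (eapply Rle_trans; [apply Rmax_r| exact Hl]).
set (u := Rpower l (M / 2)).
assert (Hu : Bd <= u).
{ unfold u. rewrite <- (Rpower_1 Bd) at 1; [|lra].
  replace 1 with ((2 / M) * (M / 2)) by (field; lra).
  rewrite <- Rpower_mult. apply Rle_Rpower_l; [apply Rlt_le, Rdiv_lt_0_compat; lra|].
  split; [apply Rpower_pos| exact HlB]. }
assert (HuM : Rpower l M = u * u) by (unfold u; rewrite <- Rpower_plus; f_equal; field).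
assert (Hlnl : ln l <= (2 / M) * u).
{ assert (ln l = (2 / M) * ln u) by (unfold u; rewrite ln_Rpower; field; lra).
  rewrite H. apply Rmult_le_compat_l; [lra| apply ln_le_self; lra]. }
assert (Hl3' : ln (l + 3) <= 1 + ln l).
{ apply Rle_trans with (ln (2 * l)); [apply ln_le; lra|].
  rewrite ln_mult; [|lra|lra]. pose proof ln2_lt_1. lra. }
assert (A + B * ln (l + 3) <= K * u).
{ apply Rle_trans with (A + B * (1 + (2 / M) * u)); [nra|]. unfold K. nra. }
assert (K <= L * u).
{ unfold Bd in Hu. apply Rmult_le_reg_r with (/ L); [apply Rinv_0_lt_compat; lra|].
  replace (L * u * / L) with u by (field; lra). unfold Rdiv in Hu. lra. }
rewrite HuM. nra.
Qed.

Lemma regret_terms_eventually_le (M L : R) : 0 < M -> 0 < L -> exists l0, 0 < l0 /\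
  forall l k, l0 <= l -> 0 < k <= l + 1 ->
  17 + 144 * ln (k + 2) + 128 * L * Rpower k M <= 300 * L * Rpower l M.
Proof.
intros HM HL.
destruct (ln_eventually_le_Rpower M (44 * L) 17 144 HM ltac:(lra) ltac:(lra) ltac:(lra))
  as [l1 Hl1].
exists (Rmax 1 (Rmax (2 * M) l1)). split; [pose proof (Rmax_l 1 (Rmax (2 * M) l1)); lra|].
intros l k Hl [Hk0 Hk].
assert (H1 : 1 <= l) by (eapply Rle_trans; [apply Rmax_l| exact Hl]).
assert (H2 : 2 * M <= l)
  by (eapply Rle_trans; [|exact Hl]; eapply Rle_trans; [apply Rmax_l| apply Rmax_r]).
assert (H3 : l1 <= l)
  by (eapply Rle_trans; [|exact Hl]; eapply Rle_trans; [apply Rmax_r| apply Rmax_r]).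
pose proof (Hl1 l H3) as Hlog.
assert (Hp : Rpower k M <= 2 * Rpower l M).
{ apply Rle_trans with (Rpower (l + 1) M).
  - apply Rle_Rpower_l; lra.
  - apply Rpower_succ_le_twice; lra. }
assert (ln (k + 2) <= ln (l + 3)) by (apply ln_le; lra).
nra.
Qed.

(** * The square loss on the box *)

Definition in_box (z : Cpx) : Prop := -1 <= fst z <= 1 /\ -1 <= snd z <= 1.

Definition sq_loss (p y : Cpx) : R := (fst y - fst p) ^ 2 + (snd y - snd p) ^ 2.

Lemma cabs_csub_sq y p : cabs (csub y p) ^ 2 = sq_loss p y.
Proof.
unfold cabs. rewrite pow2_sqrt; [reflexivity|].
pose proof (pow2_ge_0 (fst (csub y p))); pose proof (pow2_ge_0 (snd (csub y p))); lra.
Qed.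

Lemma Rabs_coords_le_cabs z : Rabs (fst z) <= cabs z /\ Rabs (snd z) <= cabs z.
Proof.
pose proof (Complex.Rmax_Cmod z) as H. split.
- eapply Rle_trans; [apply Rmax_l| exact H].
- eapply Rle_trans; [apply Rmax_r| exact H].
Qed.

Lemma in_box_of_cabs_le_1 z : cabs z <= 1 -> in_box z.
Proof.
intros H. destruct (Rabs_coords_le_cabs z) as [H1 H2].
split; apply Rabs_le_between; lra.
Qed.

Lemma sq_loss_bounds p y : in_box p -> in_box y -> 0 <= sq_loss p y <= 8.
Proof.
intros [? ?] [? ?]. unfold sq_loss.
assert (0 <= (2 - (fst y - fst p)) * (fst y - fst p + 2)) by (apply Rmult_le_pos; lra).
assert (0 <= (2 - (snd y - snd p)) * (snd y - snd p + 2)) by (apply Rmult_le_pos; lra).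
pose proof (pow2_ge_0 (fst y - fst p)); pose proof (pow2_ge_0 (snd y - snd p)). nra.
Qed.

Definition eta : R := / 64.

(* Exp-concavity of the square loss on the box, as a tangent-line bound at [m]:
   once [m] is a weighted mean of the [p]'s, the linear term averages out. *)
Lemma exp_sq_loss_gap_le (y m p : Cpx) : in_box y -> in_box m -> in_box p ->
  exp (eta * (sq_loss m y - sq_loss p y))
  <= 1 + 2 * eta * ((fst y - fst m) * (fst p - fst m) + (snd y - snd m) * (snd p - snd m)).
Proof.
destruct y as [y1 y2], m as [m1 m2], p as [p1 p2].
intros [? ?] [? ?] [? ?]. unfold sq_loss, eta; cbn [fst snd] in *.
set (d1 := p1 - m1). set (d2 := p2 - m2).
set (u1 := (y1 - m1) + (y1 - p1)). set (u2 := (y2 - m2) + (y2 - p2)).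
set (x := / 64 * (((y1 - m1) ^ 2 + (y2 - m2) ^ 2) - ((y1 - p1) ^ 2 + (y2 - p2) ^ 2))).
assert (Hx : x = / 64 * (d1 * u1 + d2 * u2)) by (unfold x, d1, d2, u1, u2; ring).
assert (Hu1 : u1 ^ 2 <= 16) by (unfold u1; nra).
assert (Hu2 : u2 ^ 2 <= 16) by (unfold u2; nra).
assert (Hd1 : d1 ^ 2 <= 4) by (unfold d1; nra).
assert (Hd2 : d2 ^ 2 <= 4) by (unfold d2; nra).
assert (CS : (d1 * u1 + d2 * u2) ^ 2 <= (d1 ^ 2 + d2 ^ 2) * (u1 ^ 2 + u2 ^ 2)).
{ pose proof (pow2_ge_0 (d1 * u2 - d2 * u1)).
  replace ((d1 ^ 2 + d2 ^ 2) * (u1 ^ 2 + u2 ^ 2))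
    with ((d1 * u1 + d2 * u2) ^ 2 + (d1 * u2 - d2 * u1) ^ 2) by ring. lra. }
assert (Hs : d1 * u1 + d2 * u2 <= 32).
{ pose proof (pow2_ge_0 (d1 - u1)); pose proof (pow2_ge_0 (d2 - u2)).
  replace ((d1 - u1) ^ 2) with (d1 ^ 2 + u1 ^ 2 - 2 * (d1 * u1)) in * by ring.
  replace ((d2 - u2) ^ 2) with (d2 ^ 2 + u2 ^ 2 - 2 * (d2 * u2)) in * by ring. lra. }
apply Rle_trans with (1 + x + 2 * x ^ 2); [apply exp_le_quadratic; lra|].
assert (Hsq : 2 * x ^ 2 <= / 64 * (d1 ^ 2 + d2 ^ 2)).
{ assert ((d1 ^ 2 + d2 ^ 2) * (u1 ^ 2 + u2 ^ 2) <= (d1 ^ 2 + d2 ^ 2) * 32) by nra.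
  assert (x ^ 2 = / 64 * / 64 * (d1 * u1 + d2 * u2) ^ 2) by (rewrite Hx; ring).
  lra. }
assert (2 * / 64 * ((y1 - m1) * d1 + (y2 - m2) * d2) = x + / 64 * (d1 ^ 2 + d2 ^ 2))
  by (rewrite Hx; unfold u1, u2, d1, d2; ring).
lra.
Qed.

Definition clip (a : R) : R := Rmax (-1) (Rmin 1 a).
Definition clipC (z : Cpx) : Cpx := (clip (fst z), clip (snd z)).

Lemma clip_range a : -1 <= clip a <= 1.
Proof. unfold clip, Rmax, Rmin. destruct (Rle_dec 1 a); destruct (Rle_dec (-1) _); lra. Qed.

Lemma clipC_in_box z : in_box (clipC z).
Proof. split; apply clip_range. Qed.

Lemma clip_dist_le y a : -1 <= y <= 1 -> Rabs (y - clip a) <= Rabs (y - a).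
Proof.
intros Hy. unfold clip, Rmax, Rmin.
destruct (Rle_dec 1 a); destruct (Rle_dec (-1) _); unfold Rabs; repeat destruct Rcase_abs; lra.
Qed.

Lemma clip_lipschitz a b : Rabs (clip a - clip b) <= Rabs (a - b).
Proof.
unfold clip, Rmax, Rmin.
destruct (Rle_dec 1 a); destruct (Rle_dec 1 b); repeat destruct (Rle_dec (-1) _);
 unfold Rabs; repeat destruct Rcase_abs; lra.
Qed.

Lemma sq_clip_le y f g : -1 <= y <= 1 ->
  (y - clip g) ^ 2 <= (y - f) ^ 2 + 4 * Rabs (f - g) + (f - g) ^ 2.
Proof.
intros Hy.
pose proof (clip_dist_le y f Hy) as H1. pose proof (clip_lipschitz f g) as H2.
pose proof (clip_range f). pose proof (clip_range g).
set a := y - clip f in H1 *. set b := clip f - clip g in H2 *.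
replace (y - clip g) with (a + b) by (unfold a, b; ring).
assert (Ha : Rabs a <= 2) by (unfold a; apply Rabs_le; lra).
assert (a ^ 2 <= (y - f) ^ 2).
{ rewrite <- (pow2_abs a), <- (pow2_abs (y - f)). apply pow_incr. split; [apply Rabs_pos| exact H1]. }
assert (b ^ 2 <= (f - g) ^ 2).
{ rewrite <- (pow2_abs b), <- (pow2_abs (f - g)). apply pow_incr. split; [apply Rabs_pos| exact H2]. }
assert (a * b <= 2 * Rabs (f - g)).
{ apply Rle_trans with (Rabs a * Rabs b); [rewrite <- Rabs_mult; apply Rle_abs|].
  pose proof (Rabs_pos a); pose proof (Rabs_pos b). nra. }
nra.
Qed.

Lemma sq_loss_clipC_le (y fz gz : Cpx) (e : R) : cabs y <= 1 -> 0 <= e <= 1 ->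
  cabs (csub fz gz) <= e -> sq_loss (clipC gz) y <= cabs (csub y fz) ^ 2 + 9 * e.
Proof.
intros Hy He Hfg. destruct (in_box_of_cabs_le_1 y Hy) as [Hy1 Hy2].
destruct (Rabs_coords_le_cabs (csub fz gz)) as [Hd1 Hd2]. cbn [fst snd csub] in Hd1, Hd2.
rewrite cabs_csub_sq. unfold sq_loss, clipC; cbn [fst snd].
pose proof (sq_clip_le (fst y) (fst fz) (fst gz) Hy1).
pose proof (sq_clip_le (snd y) (snd fz) (snd gz) Hy2).
assert (Hsq : sq_loss gz fz <= e ^ 2).
{ rewrite <- cabs_csub_sq. apply pow_incr. split; [apply sqrt_pos| exact Hfg]. }
unfold sq_loss in Hsq. assert (e ^ 2 <= e) by nra. lra.
Qed.

Lemma cabs_csub_sym a b : cabs (csub a b) = cabs (csub b a).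
Proof. unfold cabs, csub; simpl. f_equal. ring. Qed.

Lemma cabs_csub_diag z : cabs (csub z z) = 0.
Proof. unfold cabs, csub; simpl. rewrite <- sqrt_0. f_equal. ring. Qed.

Lemma cabs_csub_triangle a b c : cabs (csub a c) <= cabs (csub a b) + cabs (csub b c).
Proof.
replace (csub a c) with (Complex.Cplus (csub a b) (csub b c)).
- apply Complex.Cmod_triangle.
- unfold csub, Complex.Cplus; f_equal; simpl; ring.
Qed.

Section Nets.
Variable X : topologicalType.

(* The open balls of radius [e] around the points of [F] cover [F]. *)
Lemma net_exists (F : set (X -> Cpx)) e : sup_compact F -> 0 < e -> exists s, is_net F e s.
Proof.
intros [_ Hc] He.
set (U := fun (i : {g : X -> Cpx | F g}) h => supdist_lt h (proj1_sig i) e).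
destruct (Hc _ U) as [s Hs].
- intros i h _ [r' [Hr' Hle]]. exists (e - r'). split; [lra|].
  intros h' _ [r'' [Hr'' Hle']]. exists (r'' + r'). split; [lra|].
  intros x. eapply Rle_trans; [apply (cabs_csub_triangle _ (h x))|].
  rewrite cabs_csub_sym. specialize (Hle x); specialize (Hle' x). lra.
- intros f Hf. exists (exist _ f Hf). exists 0. split; [lra|].
  intros x. simpl. rewrite cabs_csub_diag. lra.
- exists (map (@proj1_sig _ _) s). split.
  + intros g Hg. apply in_map_iff in Hg. destruct Hg as [i [<- _]]. exact (proj2_sig i).
  + intros f Hf. destruct (Hs f Hf) as [i [Hi [r' [Hr' Hle]]]].
    exists (proj1_sig i). split; [apply in_map; auto|].
    intros x. specialize (Hle x). lra.
Qed.

Lemma covnum_spec (F : set (X -> Cpx)) e : sup_compact F -> 0 < e ->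
  is_covnum F e (covnum F e).
Proof.
intros Hc He. destruct (net_exists F e Hc He) as [s0 Hs0].
apply (epsilon_spec (inhabits 0%nat) (fun n => is_covnum F e n)).
assert (Hmin : forall n, (exists s, is_net F e s /\ length s = n) -> exists m, is_covnum F e m).
{ intros n. induction n as [n IH] using (well_founded_induction Wf_nat.lt_wf). intros Hn.
  destruct (Classical_Prop.classic (exists m, (m < n)%coq_nat /\ exists s, is_net F e s /\ length s = m))
    as [[m [Hm Hs]]|Hno].
  - exact (IH m Hm Hs).
  - exists n. split; auto. intros s Hs.
    destruct (Nat.le_gt_cases n (length s)) as [|Hlt]; auto.
    exfalso. apply Hno. exists (length s). split; auto. exists s; auto. }
apply (Hmin (length s0)). exists s0; auto.
Qed.

End Nets.

(** * The aggregating algorithm with sleeping experts *)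

Section Aggregation.
Variables (X : Type) (size : nat -> nat) (expert : nat -> nat -> X -> Cpx).

Definition levels (n : nat) : nat := Nat.pow 2 n.
Definition level_weight (k : nat) : R := / ((INR k + 1) * (INR k + 2)).
Definition prior (k : nat) : R := level_weight k / INR (size k).
Definition wsum (n : nat) (f : nat -> nat -> R) : R :=
  rsum (fun k => rsum (f k) (size k)) (levels n).
Definition weight (D : nat -> nat -> R) (k j : nat) : R := prior k * exp (eta * D k j).
Definition aggregate (D : nat -> nat -> R) (n : nat) (x : X) : Cpx :=
  (wsum n (fun k j => weight D k j * fst (expert k j x)) / wsum n (weight D),
   wsum n (fun k j => weight D k j * snd (expert k j x)) / wsum n (weight D)).

(* The
   history [h] lists the rounds most recent first; level k is awake at round n
   iff [k < levels n]. *)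
Fixpoint awake_regret (h : list (X * Cpx)) : nat -> nat -> R :=
  match h with
  | nil => fun _ _ => 0
  | (x, y) :: h' => fun k j => awake_regret h' k j +
      (if Nat.ltb k (levels (length h'))
       then sq_loss (aggregate (awake_regret h') (length h') x) y - sq_loss (expert k j x) y
       else 0)
  end.

Definition aggregating_strategy : strategy X :=
  fun h x => aggregate (awake_regret (List.rev h)) (length h) x.

Lemma levels_pos n : (0 < levels n)%coq_nat.
Proof. unfold levels. apply Nat.neq_0_lt_0, Nat.pow_nonzero. lia. Qed.

Lemma levels_S n : levels (S n) = (levels n + levels n)%coq_nat.
Proof. unfold levels. rewrite Nat.pow_succ_r'. lia. Qed.

Lemma levels_mono a b : (a <= b)%coq_nat -> (levels a <= levels b)%coq_nat.
Proof. intros H. apply Nat.pow_le_mono_r; lia. Qed.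

Lemma level_weight_pos k : 0 < level_weight k.
Proof. pose proof (pos_INR k). apply Rinv_0_lt_compat. nra. Qed.

Lemma rsum_level_weight_le_1 K : rsum level_weight K <= 1.
Proof.
assert (Htel : rsum level_weight K = 1 - / (INR K + 1)).
{ induction K as [|K IH]; [simpl; lra|].
  simpl rsum. rewrite IH S_INR. unfold level_weight. pose proof (pos_INR K). field. lra. }
rewrite Htel. pose proof (pos_INR K).
assert (0 < / (INR K + 1)) by (apply Rinv_0_lt_compat; lra). lra.
Qed.

Lemma wsum_le n f g :
  (forall k j, (k < levels n)%coq_nat -> (j < size k)%coq_nat -> f k j <= g k j) ->
  wsum n f <= wsum n g.
Proof. intros H. apply rsum_le. intros k Hk. apply rsum_le. auto. Qed.

Lemma wsum_plus n f g : wsum n (fun k j => f k j + g k j) = wsum n f + wsum n g.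
Proof. unfold wsum. rewrite <- rsum_plus. apply rsum_ext. intros k _. apply rsum_plus. Qed.

Lemma wsum_scal n c f : wsum n (fun k j => c * f k j) = c * wsum n f.
Proof. unfold wsum. rewrite <- rsum_scal. apply rsum_ext. intros k _. apply rsum_scal. Qed.

Lemma wsum_ge_term n f k j : (forall k j, 0 <= f k j) ->
  (k < levels n)%coq_nat -> (j < size k)%coq_nat -> f k j <= wsum n f.
Proof.
intros H Hk Hj. apply Rle_trans with (rsum (f k) (size k)).
- apply rsum_ge_term; auto.
- apply (rsum_ge_term (fun k => rsum (f k) (size k))); auto.
  intros k' _. apply rsum_nonneg. auto.
Qed.

Lemma wsum_mean_in_interval n v c : (forall k j, 0 <= v k j) -> 0 < wsum n v ->
  (forall k j, -1 <= c k j <= 1) -> -1 <= wsum n (fun k j => v k j * c k j) / wsum n v <= 1.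
Proof.
intros Hv Hpos Hc.
assert (- wsum n v <= wsum n (fun k j => v k j * c k j)).
{ replace (- wsum n v) with (wsum n (fun k j => -1 * v k j)) by (rewrite wsum_scal; ring).
  apply wsum_le. intros k j _ _. specialize (Hv k j); specialize (Hc k j). nra. }
assert (wsum n (fun k j => v k j * c k j) <= wsum n v).
{ apply wsum_le. intros k j _ _. specialize (Hv k j); specialize (Hc k j). nra. }
split; [apply Rle_div_r | apply Rle_div_l]; lra.
Qed.

Hypothesis size_pos : forall k, (0 < size k)%coq_nat.

Lemma prior_pos k : 0 < prior k.
Proof. apply Rdiv_lt_0_compat; [apply level_weight_pos| apply lt_0_INR, size_pos]. Qed.

Lemma ln_inv_prior k : - ln (prior k) = ln (INR k + 1) + ln (INR k + 2) + ln (INR (size k)).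
Proof.
pose proof (pos_INR k). pose proof (lt_0_INR _ (size_pos k)).
unfold prior, level_weight, Rdiv. rewrite <- Rinv_mult, ln_Rinv; [|nra].
rewrite !ln_mult; lra || nra.
Qed.

Lemma weight_pos D k j : 0 < weight D k j.
Proof. apply Rmult_lt_0_compat; [apply prior_pos| apply exp_pos]. Qed.

Lemma wsum_weight_pos n D : 0 < wsum n (weight D).
Proof.
apply Rlt_le_trans with (weight D 0 0); [apply weight_pos|].
apply wsum_ge_term; [intros; apply Rlt_le, weight_pos| apply levels_pos| apply size_pos].
Qed.

Hypothesis expert_box : forall k j x, in_box (expert k j x).

Lemma aggregate_in_box D n x : in_box (aggregate D n x).
Proof.
split; apply wsum_mean_in_interval;
  solve [intros; apply Rlt_le, weight_pos | apply wsum_weight_pos | intros k j; apply expert_box].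
Qed.

Section Play.
Variables (xs : nat -> X) (ys : nat -> Cpx).
Hypothesis ys_box : forall n, in_box (ys n).

Definition prediction (n : nat) : Cpx := pred_at aggregating_strategy xs ys n.
Definition regret_at (n : nat) : nat -> nat -> R :=
  awake_regret (List.rev (List.map (fun i => (xs i, ys i)) (List.seq 0 n))).

Lemma prediction_eq n : prediction n = aggregate (regret_at n) n (xs n).
Proof.
unfold prediction, pred_at, aggregating_strategy, regret_at.
rewrite length_map length_seq. reflexivity.
Qed.

Lemma regret_at_S n k j : regret_at (S n) k j = regret_at n k j +
  (if Nat.ltb k (levels n)
   then sq_loss (prediction n) (ys n) - sq_loss (expert k j (xs n)) (ys n) else 0).
Proof.
rewrite prediction_eq. unfold regret_at.
rewrite seq_S map_app rev_app_distr. simpl. rewrite length_rev length_map length_seq. reflexivity.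
Qed.

Lemma regret_at_eq_rsum N k j : regret_at N k j = rsum (fun t =>
  if Nat.ltb k (levels t)
  then sq_loss (prediction t) (ys t) - sq_loss (expert k j (xs t)) (ys t) else 0) N.
Proof. induction N as [|N IH]; [reflexivity|]. rewrite regret_at_S IH. reflexivity. Qed.

Lemma regret_at_asleep n k j :
  (forall t, (t < n)%coq_nat -> (levels t <= k)%coq_nat) -> regret_at n k j = 0.
Proof.
intros H. rewrite regret_at_eq_rsum (rsum_ext _ (fun _ : nat => 0)).
- rewrite rsum_const. ring.
- intros t Ht. rewrite (proj2 (Nat.ltb_ge _ _) (H t Ht)). reflexivity.
Qed.

Lemma wsum_weight_update_le n :
  wsum n (fun k j => weight (regret_at n) k j *
    exp (eta * (sq_loss (prediction n) (ys n) - sq_loss (expert k j (xs n)) (ys n))))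
  <= wsum n (weight (regret_at n)).
Proof.
set (v := weight (regret_at n)). set (x := xs n). set (y := ys n). set (m := prediction n).
assert (Hm : in_box m) by (unfold m; rewrite prediction_eq; apply aggregate_in_box).
set (c1 := 2 * eta * (fst y - fst m)). set (c2 := 2 * eta * (snd y - snd m)).
apply Rle_trans with (wsum n (fun k j => v k j + c1 * (v k j * fst (expert k j x))
    + c2 * (v k j * snd (expert k j x)) + (- (c1 * fst m + c2 * snd m)) * v k j)).
- apply wsum_le. intros k j _ _.
  pose proof (exp_sq_loss_gap_le y m (expert k j x) (ys_box n) Hm (expert_box k j x)) as Ht.
  assert (Hv : 0 < v k j) by apply weight_pos.
  apply Rle_trans with (v k j * (1 + 2 * eta * ((fst y - fst m) * (fst (expert k j x) - fst m)
                                     + (snd y - snd m) * (snd (expert k j x) - snd m)))).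
  + apply Rmult_le_compat_l; [lra| exact Ht].
  + unfold c1, c2. lra.
- rewrite !wsum_plus !wsum_scal.
  assert (Hpos : 0 < wsum n v) by apply wsum_weight_pos.
  assert (E1 : fst m = wsum n (fun k j => v k j * fst (expert k j x)) / wsum n v)
    by (unfold m; rewrite prediction_eq; reflexivity).
  assert (E2 : snd m = wsum n (fun k j => v k j * snd (expert k j x)) / wsum n v)
    by (unfold m; rewrite prediction_eq; reflexivity).
  assert (F1 : fst m * wsum n v = wsum n (fun k j => v k j * fst (expert k j x)))
    by (rewrite E1; field; lra).
  assert (F2 : snd m * wsum n v = wsum n (fun k j => v k j * snd (expert k j x)))
    by (rewrite E2; field; lra).
  rewrite <- F1, <- F2. lra.
Qed.

(* Levels still asleep are counted at their prior mass, so that waking them up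
   leaves the potential unchanged. *)
Definition potential (n : nat) : R :=
  wsum n (weight (regret_at n)) + (1 - rsum level_weight (levels n)).

Lemma rsum_weight_asleep n k : (forall t, (t < n)%coq_nat -> (levels t <= k)%coq_nat) ->
  rsum (weight (regret_at n) k) (size k) = level_weight k.
Proof.
intros Hk. rewrite (rsum_ext _ (fun _ => prior k)).
- rewrite rsum_const. unfold prior. pose proof (lt_0_INR _ (size_pos k)). field. lra.
- intros j _. unfold weight. rewrite regret_at_asleep; [|exact Hk].
  rewrite Rmult_0_r exp_0. ring.
Qed.

Lemma potential_0 : potential 0 = 1.
Proof.
unfold potential, wsum. change (levels 0) with 1%nat. simpl rsum.
rewrite (rsum_weight_asleep 0 0); [lra| intros; lia].
Qed.

Lemma potential_S_le n : potential (S n) <= potential n.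
Proof.
unfold potential, wsum at 1. rewrite levels_S !rsum_split.
rewrite (rsum_ext (fun i => rsum (weight (regret_at (S n)) (levels n + i)%coq_nat)
    (size (levels n + i)%coq_nat)) (fun i => level_weight (levels n + i)%coq_nat)).
2:{ intros i _. apply rsum_weight_asleep. intros t Ht.
    apply Nat.le_trans with (levels n); [apply levels_mono; lia| lia]. }
assert (H : rsum (fun k => rsum (weight (regret_at (S n)) k) (size k)) (levels n)
  = wsum n (fun k j => weight (regret_at n) k j *
     exp (eta * (sq_loss (prediction n) (ys n) - sq_loss (expert k j (xs n)) (ys n))))).
{ apply rsum_ext. intros k Hk. apply rsum_ext. intros j _.
  unfold weight. rewrite regret_at_S (proj2 (Nat.ltb_lt _ _) Hk).
  rewrite Rmult_assoc -exp_plus. f_equal. f_equal. ring. }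
rewrite H. pose proof (wsum_weight_update_le n). lra.
Qed.

Lemma potential_le_1 n : potential n <= 1.
Proof.
induction n as [|n IH]; [rewrite potential_0; lra|]. pose proof (potential_S_le n). lra.
Qed.

Lemma weight_le_1 N k j : (k < levels N)%coq_nat -> (j < size k)%coq_nat ->
  weight (regret_at N) k j <= 1.
Proof.
intros Hk Hj. pose proof (potential_le_1 N) as Hpot.
pose proof (wsum_ge_term N (weight (regret_at N)) k j
  ltac:(intros; apply Rlt_le, weight_pos) Hk Hj).
pose proof (rsum_level_weight_le_1 (levels N)). unfold potential in Hpot. lra.
Qed.

Lemma regret_at_le N k j : (k < levels N)%coq_nat -> (j < size k)%coq_nat ->
  regret_at N k j <= 64 * (ln (INR k + 1) + ln (INR k + 2) + ln (INR (size k))).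
Proof.
intros Hk Hj. rewrite <- ln_inv_prior.
pose proof (ln_le _ _ (weight_pos (regret_at N) k j) (weight_le_1 N k j Hk Hj)) as Hw.
unfold weight in Hw. rewrite ln_1 ln_mult ?ln_exp in Hw; [|apply prior_pos| apply exp_pos].
unfold eta in Hw. lra.
Qed.

(* An expert of level [k] sleeps during the rounds [t < s], where each round
   costs the aggregated prediction at most the loss bound 8. *)
Lemma aggregating_regret N k j s :
  (k < levels N)%coq_nat -> (j < size k)%coq_nat -> (k < levels s)%coq_nat ->
  rsum (fun t => sq_loss (prediction t) (ys t)) N <=
  rsum (fun t => sq_loss (expert k j (xs t)) (ys t)) N
  + 64 * (ln (INR k + 1) + ln (INR k + 2) + ln (INR (size k))) + 8 * INR s.
Proof.
intros Hk Hj Hs.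
set (asleep := fun t => if Nat.ltb k (levels t) then 0
  else sq_loss (prediction t) (ys t) - sq_loss (expert k j (xs t)) (ys t)).
assert (Hsplit : rsum (fun t => sq_loss (prediction t) (ys t)) N =
  rsum (fun t => sq_loss (expert k j (xs t)) (ys t)) N + regret_at N k j + rsum asleep N).
{ rewrite regret_at_eq_rsum -!rsum_plus. apply rsum_ext. intros t _.
  unfold asleep. destruct (Nat.ltb k (levels t)); ring. }
assert (Hasleep : rsum asleep N <= 8 * INR s).
{ apply rsum_le_of_eventually_nonpos; [lra| |].
  - intros t. unfold asleep. destruct (Nat.ltb k (levels t)); [lra|].
    assert (in_box (prediction t)) by (rewrite prediction_eq; apply aggregate_in_box).
    pose proof (sq_loss_bounds _ _ H (ys_box t)).
    pose proof (sq_loss_bounds _ _ (expert_box k j (xs t)) (ys_box t)). lra.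
  - intros t Ht. unfold asleep.
    rewrite (proj2 (Nat.ltb_lt _ _) (Nat.lt_le_trans _ _ _ Hs (levels_mono _ _ Ht))). lra. }
pose proof (regret_at_le N k j Hk Hj). lra.
Qed.

End Play.
End Aggregation.

(** * Experts from minimal nets *)

Definition scale (k : nat) : R := (/ 2) ^ k.

Lemma scale_pos k : 0 < scale k.
Proof. apply pow_lt. lra. Qed.

Lemma scale_le_1 k : scale k <= 1.
Proof. unfold scale. rewrite <- (pow1 k). apply pow_incr. lra. Qed.

Lemma scale_mul_le_1 k N : (N <= Nat.pow 2 k)%coq_nat -> scale k * INR N <= 1.
Proof.
intros H. apply le_INR in H. rewrite pow_INR in H. replace (INR 2) with 2 in H by (simpl; lra).
assert (E : scale k * 2 ^ k = 1)
  by (unfold scale; rewrite <- Rpow_mult_distr; replace (/ 2 * 2) with 1 by field; apply pow1).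
pose proof (scale_pos k). nra.
Qed.

Lemma log2_inv_scale k : log2 (1 / scale k) = INR k.
Proof.
unfold log2, scale. rewrite pow_inv.
replace (1 / / 2 ^ k) with (2 ^ k) by (field; apply pow_nonzero; lra).
rewrite ln_pow; [|lra]. pose proof ln2_pos. field. lra.
Qed.

Lemma rpow_pos_eq x M : 0 < x -> rpow x M = Rpower x M.
Proof. intros Hx. unfold rpow. destruct (Rlt_dec 0 x); [reflexivity| lra]. Qed.

Lemma INR_log2_up_le N : (2 <= N)%coq_nat -> INR (Nat.log2_up N) <= log2 (INR N) + 1.
Proof.
intros HN. destruct (Nat.log2_up_spec N ltac:(lia)) as [H _].
pose proof (log2_INR_ge_of_pow_le (Nat.pred (Nat.log2_up N)) N ltac:(lia)).
pose proof (Nat.log2_up_pos N ltac:(lia)).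
replace (Nat.log2_up N) with (S (Nat.pred (Nat.log2_up N))) at 1 by lia.
rewrite S_INR. lra.
Qed.

Lemma entropy_scale_le_of_limsup (X : topologicalType) (F : set (X -> Cpx)) M L :
  0 < L -> is_limsup0 (fun e => entropy F e / rpow (log2 (1 / e)) M) L ->
  exists k1, forall k, (k1 <= k)%coq_nat -> entropy F (scale k) <= 2 * L * Rpower (INR k) M.
Proof.
intros HL [Hup _]. destruct (Hup L HL) as [d [Hd Hbd]].
destruct (pow_lt_1_zero (/ 2) ltac:(rewrite Rabs_pos_eq; lra) d Hd) as [k0 Hk0].
exists (Nat.max k0 1). intros k Hk.
assert (Hsd : scale k < d).
{ specialize (Hk0 k ltac:(lia)). rewrite Rabs_pos_eq in Hk0; [exact Hk0|]. apply Rlt_le, scale_pos. }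
specialize (Hbd (scale k) (conj (scale_pos k) Hsd)).
assert (Hkpos : 0 < INR k) by (apply lt_0_INR; lia).
rewrite log2_inv_scale rpow_pos_eq in Hbd; [|exact Hkpos].
pose proof (Rpower_pos (INR k) M).
apply Rle_div_l in Hbd; [lra| lra].
Qed.

Section NetExperts.
Variables (X : topologicalType) (F : set (X -> Cpx)).

Definition min_net (k : nat) : list (X -> Cpx) :=
  epsilon (inhabits nil) (fun s => is_net F (scale k) s /\ length s = covnum F (scale k)).
Definition net_expert (k j : nat) (x : X) : Cpx :=
  clipC (List.nth j (min_net k) (fun _ => (0, 0)) x).
Definition net_strategy : strategy X :=
  aggregating_strategy X (fun k => length (min_net k)) net_expert.

Hypothesis F_compact : sup_compact F.

Lemma min_net_spec k : is_net F (scale k) (min_net k) /\ length (min_net k) = covnum F (scale k).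
Proof.
apply (epsilon_spec (inhabits nil)
  (fun s => is_net F (scale k) s /\ length s = covnum F (scale k))).
destruct (covnum_spec X F (scale k) F_compact (scale_pos k)) as [[s Hs] _]. exists s. exact Hs.
Qed.

Variable f : X -> Cpx.
Hypothesis Ff : F f.

Lemma min_net_length_pos k : (0 < length (min_net k))%coq_nat.
Proof.
destruct (min_net_spec k) as [[_ Hcov] _]. destruct (Hcov f Ff) as [g [Hg _]].
destruct (min_net k); simpl in *; [contradiction| lia].
Qed.

Lemma ln_min_net_length_le_entropy k : ln (INR (length (min_net k))) <= entropy F (scale k).
Proof.
unfold entropy, log2. rewrite <- (proj2 (min_net_spec k)).
assert (H1 : 1 <= INR (length (min_net k))) by (apply (le_INR 1); apply min_net_length_pos).
assert (0 <= ln (INR (length (min_net k)))) by (rewrite <- ln_1; apply ln_le; lra).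
pose proof ln2_pos; pose proof ln2_lt_1.
apply Rle_div_r; [lra|]. nra.
Qed.

Lemma net_strategy_regret (xs : nat -> X) (ys : nat -> Cpx) N :
  (forall n, cabs (ys n) <= 1) -> (2 <= N)%coq_nat ->
  rsum (fun n => cabs (csub (ys n) (pred_at net_strategy xs ys n)) ^ 2) N <=
  rsum (fun n => cabs (csub (ys n) (f (xs n))) ^ 2) N
  + 17 + 144 * ln (INR (Nat.log2_up N) + 2) + 64 * ln (INR (length (min_net (Nat.log2_up N)))).
Proof.
intros Hys HN. set (k := Nat.log2_up N).
assert (Hk1 : (1 <= k)%coq_nat) by (apply Nat.log2_up_pos; lia).
assert (HNk : (N <= Nat.pow 2 k)%coq_nat) by (apply Nat.log2_log2_up_spec; lia).
assert (HkN : (k < levels N)%coq_nat).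
{ apply Nat.lt_trans with N; [apply Nat.log2_up_lt_lin; lia| apply Nat.pow_gt_lin_r; lia]. }
destruct (min_net_spec k) as [[_ Hcov] _]. destruct (Hcov f Ff) as [g [Hg Hfg]].
destruct (In_nth (min_net k) g (fun _ => (0, 0)) Hg) as [j [Hj Hnth]].
set (s := S (Nat.log2 k)).
assert (Hs : (k < levels s)%coq_nat) by (apply Nat.log2_spec; lia).
pose proof (aggregating_regret X _ net_expert min_net_length_pos (fun k j x => clipC_in_box _)
  xs ys (fun n => in_box_of_cabs_le_1 _ (Hys n)) N k j s HkN Hj Hs) as Hreg.
assert (Happrox : rsum (fun t => sq_loss (net_expert k j (xs t)) (ys t)) N <=
  rsum (fun n => cabs (csub (ys n) (f (xs n))) ^ 2) N + 9).
{ apply Rle_trans with (rsum (fun n => cabs (csub (ys n) (f (xs n))) ^ 2 + 9 * scale k) N).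
  - apply rsum_le. intros t _. unfold net_expert. rewrite Hnth.
    apply sq_loss_clipC_le; [apply Hys| split; [apply Rlt_le, scale_pos| apply scale_le_1]| apply Hfg].
  - rewrite rsum_plus rsum_const. pose proof (scale_mul_le_1 k N HNk). lra. }
assert (INR s <= 1 + 2 * ln (INR k + 2))
  by (unfold s; rewrite S_INR; pose proof (INR_log2_le_ln k ltac:(lia)); lra).
assert (ln (INR k + 1) <= ln (INR k + 2)) by (pose proof (pos_INR k); apply ln_le; lra).
rewrite (rsum_ext _ (fun t =>
  sq_loss (prediction X (fun k => length (min_net k)) net_expert xs ys t) (ys t))).
- lra.
- intros t _. apply cabs_csub_sq.
Qed.

End NetExperts.

Theorem corollary4 :
  exists C : R, 0 < C /\
  forall (X : topologicalType), inhabited X ->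
  forall (F : set (X -> Cpx)) (M L : R),
    sup_compact F -> 0 < M ->
    is_limsup0 (fun e => entropy F e / rpow (log2 (1 / e)) M) L ->
    0 < L ->
    exists S : strategy X,
      forall f, F f ->
      exists N0 : nat, forall (N : nat), (N0 <= N)%coq_nat ->
      forall (xs : nat -> X) (ys : nat -> Cpx),
        (forall n, cabs (ys n) <= 1) ->
        rsum (fun n => cabs (csub (ys n) (pred_at S xs ys n)) ^ 2) N
        <= rsum (fun n => cabs (csub (ys n) (f (xs n))) ^ 2) N
           + C * L * rpow (log2 (INR N)) M.
Proof.
exists 300. split; [lra|]. intros X _ F M L HF HM Hlim HL.
exists (net_strategy X F). intros f Ff.
destruct (entropy_scale_le_of_limsup X F M L HL Hlim) as [k1 Hent].
destruct (regret_terms_eventually_le M L HM HL) as [l0 [Hl0 Hasym]].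
destruct (INR_unbounded l0) as [n0 Hn0].
exists (Nat.max 2 (Nat.max (Nat.pow 2 k1) (Nat.pow 2 n0))). intros N HN xs ys Hys.
set (k := Nat.log2_up N).
assert (Hk1 : (k1 <= k)%coq_nat).
{ rewrite <- (Nat.log2_up_pow2 k1); [apply Nat.log2_up_le_mono; lia| lia]. }
assert (Hl : l0 <= log2 (INR N)) by (pose proof (log2_INR_ge_of_pow_le n0 N ltac:(lia)); lra).
assert (Hk : 0 < INR k <= log2 (INR N) + 1).
{ split; [apply lt_0_INR, Nat.log2_up_pos; lia| apply INR_log2_up_le; lia]. }
pose proof (net_strategy_regret X F HF f Ff xs ys N Hys ltac:(lia)) as Hreg. fold k in Hreg.
pose proof (ln_min_net_length_le_entropy X F HF f Ff k).
pose proof (Hent k Hk1).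
pose proof (Hasym _ _ Hl Hk).
rewrite rpow_pos_eq; lra.
Qed.
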